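(* Problem (RO-$\Sigma$) has an optimal solution $(B,\beta_1,\ldots,\beta_B)$ satisfying $|\{b\in\{1,\ldots,B\}: i\in\beta_b\}|<|\{b\in\{1,\ldots,B\}: j\in\beta_b\}|$ for all candidates $i<j$ that belong to the same contest.
   Context: A ballot style consists of contests $\mathcal{C}=\{1,\ldots,C\}$, candidates $\mathcal{N}=\{1,\ldots,N\}$ partitioned into nonempty sets $\mathcal{N}_c$ ($c\in\mathcal{C}$), and positive integers $v_c$. A filled-out ballot is a subset $\beta\subseteq\mathcal{N}$; $\mathscr{B}=\{\beta\subseteq\mathcal{N}: |\mathcal{N}_c\cap\beta|\le v_c\ \forall c\}$. For $i\in\mathcal{N}_c$: $T^*_i(\beta_1,\ldots,\beta_B)=\sum_{b=1}^B\mathbb{I}\{i\in\beta_b\text{ and }|\mathcal{N}_c\cap\beta_b|\le v_c\}$, and for a bijection $\sigma$ of $\mathcal{N}$, $T^\sigma_i(\beta_1,\ldots,\beta_B)=\sum_{b=1}^B\mathbb{I}\{\sigma(i)\in\beta_b\text{ and }|\{\sigma(j)\in\beta_b: j\in\mathcal{N}_c\}|\le v_c\}$. $\Sigma$ is the set of non-identity bijections $\mathcal{N}\to\mathcal{N}$. Problem (RO-$\Sigma$): minimize $B$ over $B\in\mathbb{N}$ and $\beta_1,\ldots,\beta_B\in\mathscr{B}$ subject to $T^\sigma(\beta_1,\ldots,\beta_B)\neq T^*(\beta_1,\ldots,\beta_B)$ for all $\sigma\in\Sigma$. *)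

From mathcomp Require Import all_boot all_fingroup.
Set Implicit Arguments. Unset Strict Implicit. Unset Printing Implicit Defensive.

(* Ballot style: candidates 'I_N (candidate k+1 of the paper is k here, order
   preserved), contests 'I_C, [con i] = the contest c with i \in N_c,
   [v c] = number of votes allowed in contest c. *)

Definition cands (N C : nat) (con : 'I_N -> 'I_C) (c : 'I_C) : {set 'I_N} :=
  [set j | con j == c].

Definition valid_ballot (N C : nat) (con : 'I_N -> 'I_C) (v : 'I_C -> nat)
  (beta : {set 'I_N}) : bool :=
  [forall c, #|cands con c :&: beta| <= v c].

Definition Tstar (N C : nat) (con : 'I_N -> 'I_C) (v : 'I_C -> nat)
  (B : nat) (beta : 'I_B -> {set 'I_N}) (i : 'I_N) : nat :=
  \sum_(b < B) ((i \in beta b) && (#|cands con (con i) :&: beta b| <= v (con i))).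

Definition Tsig (N C : nat) (con : 'I_N -> 'I_C) (v : 'I_C -> nat)
  (B : nat) (beta : 'I_B -> {set 'I_N}) (s : {perm 'I_N}) (i : 'I_N) : nat :=
  \sum_(b < B) ((s i \in beta b) &&
     (#|[set x in beta b | x \in s @: cands con (con i)]| <= v (con i))).

Definition feasible (N C : nat) (con : 'I_N -> 'I_C) (v : 'I_C -> nat)
  (B : nat) (beta : 'I_B -> {set 'I_N}) : Prop :=
  (forall b, valid_ballot con v (beta b)) /\
  (forall s : {perm 'I_N}, s != 1%g ->
     exists i, Tsig con v beta s i <> Tstar con v beta i).

Definition optimal (N C : nat) (con : 'I_N -> 'I_C) (v : 'I_C -> nat)
  (B : nat) (beta : 'I_B -> {set 'I_N}) : Prop :=
  feasible con v beta /\
  (forall (B' : nat) (beta' : 'I_B' -> {set 'I_N}), feasible con v beta' -> B <= B').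

From mathcomp Require Import all_boot all_fingroup.
From mathcomp Require Import zify.
From Stdlib Require Import Classical FunctionalExtensionality.

Set Implicit Arguments. Unset Strict Implicit. Unset Printing Implicit Defensive.

(* Write [votes beta k] for the number of ballots of [beta] marking k.  For
   valid ballots T^* = votes, and T^sigma_k <= votes (sigma k).
   - A list of valid ballots whose vote counts are pairwise distinct is
     feasible: if T^sigma = T^* then votes k <= votes (sigma k) for all k, which
     forces equality because sigma permutes the candidates, hence sigma = id.
   - Conversely, in a feasible solution candidates of the same contest have
     distinct counts (else the transposition of the two is not detected).
   - Relabelling all ballots by a contest-preserving permutation p keeps
     feasibility and moves the count of k to p k.
   - Feasible solutions exist (candidate k marked alone on k ballots).
   Take the least feasible B and, among the finitely many feasible lists of B
   ballots, one maximizing the potential sum_k k * votes k.  If some i < j in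
   one contest had votes j < votes i, swapping i and j would increase the
   potential; so counts increase along each contest. *)

Lemma least_witness (P : nat -> Prop) n :
  P n -> exists m, P m /\ forall k, P k -> m <= k.
Proof.
elim/ltn_ind: n => n IH Pn.
have [[k [lt_kn Pk]] | no_smaller] := classic (exists k, k < n /\ P k).
  exact: IH lt_kn Pk.
exists n; split=> // k Pk; rewrite leqNgt; apply/negP => lt_kn.
by apply: no_smaller; exists k.
Qed.

Lemma exists_argmax (T : finType) (P : T -> Prop) (f : T -> nat) x0 :
  P x0 -> exists x, P x /\ forall y, P y -> f y <= f x.
Proof.
move=> Px0; pose M := \max_(y : T) f y.
have [_ [[x [Px <-]] least]] :=
  @least_witness (fun m => exists x, P x /\ M - f x = m) _
    (ex_intro _ x0 (conj Px0 erefl)).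
exists x; split=> // y Py.
have := least _ (ex_intro _ y (conj Py erefl)).
have := leq_bigmax (F := f) x; have := leq_bigmax (F := f) y; rewrite -/M; lia.
Qed.

(* If a permutation never decreases f, it leaves f invariant: the sum of f is
   unchanged by the permutation, so no term can strictly increase. *)
Lemma perm_nondecreasing_invariant (T : finType) (s : {perm T}) (f : T -> nat) :
  (forall x, f x <= f (s x)) -> forall x, f (s x) = f x.
Proof.
move=> f_le x; apply/eqP; rewrite eq_sym eqn_leq f_le leqNgt; apply/negP => lt_x.
have sum_perm : \sum_y f (s y) = \sum_y f y.
  by rewrite [RHS](reindex_inj (@perm_inj _ s)).
have : \sum_y f y < \sum_y f (s y).
  rewrite (bigD1 x) // [X in _ < X](bigD1 x) //= -addSn leq_add //.
  by apply: leq_sum => y _.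
by rewrite sum_perm ltnn.
Qed.

Lemma fun_of_finfun (aT : finType) (rT : Type) (f : aT -> rT) :
  fun_of_fin (finfun f) = f.
Proof. by apply: functional_extensionality => x; rewrite ffunE. Qed.

Lemma mem_perm_imset (T : finType) (s : {perm T}) (A : {set T}) z :
  (z \in s @: A) = (s^-1%g z \in A).
Proof. by rewrite (can_imset_pre _ (permK s)) inE. Qed.

Section BallotStyle.
Variables (N C : nat) (con : 'I_N -> 'I_C) (v : 'I_C -> nat).

Definition votes B (beta : 'I_B -> {set 'I_N}) (k : 'I_N) : nat :=
  #|[set b | k \in beta b]|.

Lemma votesE B (beta : 'I_B -> {set 'I_N}) k :
  votes beta k = \sum_(b < B) (k \in beta b).
Proof.
by rewrite /votes -sum1dep_card big_mkcond; apply: eq_bigr => b _; case: ifP.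
Qed.

Definition all_valid B (beta : 'I_B -> {set 'I_N}) : Prop :=
  forall b, valid_ballot con v (beta b).

Definition con_preserving (s : {perm 'I_N}) : Prop := forall x, con (s x) = con x.

Lemma tperm_con_preserving i j : con i = con j -> con_preserving (tperm i j).
Proof. by move=> con_ij x; case: tpermP => // ->. Qed.

Lemma con_preservingV s : con_preserving s -> con_preserving s^-1%g.
Proof. by move=> s_pres x; rewrite -{2}(permKV s x) s_pres. Qed.

(* On valid ballots no contest is overvoted, so T^* just counts votes. *)
Lemma Tstar_votes B (beta : 'I_B -> {set 'I_N}) k :
  all_valid beta -> Tstar con v beta k = votes beta k.
Proof.
move=> valid; rewrite votesE; apply: eq_bigr => b _.
by have /forallP/(_ (con k)) -> := valid b; rewrite andbT.
Qed.

Lemma Tsig_le_votes B (beta : 'I_B -> {set 'I_N}) s k :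
  Tsig con v beta s k <= votes beta (s k).
Proof.
by rewrite votesE; apply: leq_sum => b _; case: (s k \in beta b); rewrite ?leq_b1.
Qed.

(* A contest-preserving permutation maps each contest onto itself, so it is
   only a relabelling of the tally. *)
Lemma Tsig_con_preserving B (beta : 'I_B -> {set 'I_N}) s k :
  all_valid beta -> con_preserving s -> Tsig con v beta s k = votes beta (s k).
Proof.
move=> valid s_pres; rewrite votesE; apply: eq_bigr => b _.
have -> : [set x in beta b | x \in s @: cands con (con k)] =
          cands con (con k) :&: beta b.
  by apply/setP => x; rewrite !inE mem_perm_imset inE con_preservingV // andbC.
by have /forallP/(_ (con k)) -> := valid b; rewrite andbT.
Qed.

Lemma feasible_of_injective_votes B (beta : 'I_B -> {set 'I_N}) :
  all_valid beta -> injective (votes beta) -> feasible con v beta.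
Proof.
move=> valid votes_inj; split=> // s s_neq1; apply: NNPP => undetected.
have Tsig_eq i : Tsig con v beta s i = votes beta i.
  rewrite -Tstar_votes //; apply: NNPP => neq; apply: undetected; by exists i.
have votes_s : forall i, votes beta (s i) = votes beta i.
  by apply: perm_nondecreasing_invariant => i; rewrite -Tsig_eq Tsig_le_votes.
move/eqP: s_neq1; apply; apply/permP => i; rewrite perm1.
exact: votes_inj.
Qed.

(* In a feasible solution two candidates of one contest get different counts:
   otherwise exchanging them would go unnoticed by the tally. *)
Lemma feasible_votes_neq B (beta : 'I_B -> {set 'I_N}) i j :
  feasible con v beta -> i != j -> con i = con j -> votes beta i != votes beta j.
Proof.
move=> [valid detect] neq_ij con_ij; apply/eqP => votes_ij.
have swap_neq1 : tperm i j != 1%g.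
  by apply: contra neq_ij => /eqP/permP/(_ i); rewrite tpermL perm1 => ->.
have [k] := detect _ swap_neq1.
rewrite Tsig_con_preserving ?Tstar_votes //; last exact: tperm_con_preserving.
by case: tpermP => [->|->|_ _] undetected; apply: undetected; rewrite ?votes_ij.
Qed.

Section Relabel.
Variables (B : nat) (beta : 'I_B -> {set 'I_N}) (p : {perm 'I_N}).
Hypothesis p_pres : con_preserving p.

Definition relabel (b : 'I_B) : {set 'I_N} := p @: beta b.

Lemma votes_relabel k : votes relabel (p k) = votes beta k.
Proof. by apply: eq_card => b; rewrite !inE mem_imset //; apply: perm_inj. Qed.

Lemma cands_relabel c b :
  cands con c :&: relabel b = p @: (cands con c :&: beta b).
Proof.
by apply/setP => x; rewrite mem_perm_imset !inE mem_perm_imset con_preservingV.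
Qed.

Lemma valid_relabel : all_valid beta -> all_valid relabel.
Proof.
move=> valid b; apply/forallP => c; have /forallP/(_ c) := valid b.
by rewrite cands_relabel card_imset //; apply: perm_inj.
Qed.

Lemma Tsig_relabel s k :
  Tsig con v relabel s (p k) = Tsig con v beta (s ^ p^-1)%g k.
Proof.
rewrite /Tsig p_pres; apply: eq_bigr => b _; congr (_ && (_ <= _)).
  by rewrite /relabel mem_perm_imset conjgE invgK !permM.
rewrite -[RHS](card_imset _ (@perm_inj _ p)); apply: eq_card => x.
rewrite mem_perm_imset !inE !mem_perm_imset !inE.
by rewrite conjgE invgK !invMg invgK !permM permKV (con_preservingV p_pres).
Qed.

Lemma feasible_relabel : feasible con v beta -> feasible con v relabel.
Proof.
move=> [valid detect]; split; first exact: valid_relabel.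
move=> s s_neq1.
have [|k undetected] := detect (s ^ p^-1)%g; first by rewrite conjg_eq1.
exists (p k); rewrite Tsig_relabel Tstar_votes; last exact: valid_relabel.
by rewrite votes_relabel -Tstar_votes.
Qed.
End Relabel.

Definition potential B (beta : 'I_B -> {set 'I_N}) : nat :=
  \sum_(k < N) k * votes beta k.

(* Swapping two candidates i < j with votes j < votes i strictly increases
   the potential, by (j - i) * (votes i - votes j). *)
Lemma potential_swap B (beta : 'I_B -> {set 'I_N}) (i j : 'I_N) :
  i < j -> votes beta j < votes beta i ->
  potential beta < potential (relabel beta (tperm i j)).
Proof.
move=> lt_ij lt_votes.
have neq_ij : i != j by rewrite neq_ltn lt_ij.
have votes_swap k : votes (relabel beta (tperm i j)) k = votes beta (tperm i j k).
  by rewrite -{1}(tpermK i j k) votes_relabel.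
rewrite /potential (bigD1 i) // (bigD1 j) 1?eq_sym //=.
rewrite [X in _ < X](bigD1 i) // [X in _ < _ + X](bigD1 j) 1?eq_sym //=.
rewrite !votes_swap tpermL tpermR !addnA.
rewrite [X in _ < _ + X](eq_bigr (fun k : 'I_N => k * votes beta k)); last first.
  by move=> k /andP[ki kj]; rewrite votes_swap tpermD // eq_sym.
rewrite ltn_add2r; move: lt_ij lt_votes.
set a := votes beta i; set c := votes beta j.
set x := nat_of_ord i; set y := nat_of_ord j; nia.
Qed.

(* Ballots indexed by pairs (k, r) of candidates: ballot (k, r) marks k alone
   when r < k and is blank otherwise, so candidate k is marked k times. *)
Definition staircase (b : 'I_#|{: 'I_N * 'I_N}|) : {set 'I_N} :=
  let: (k, r) := enum_val b in if r < k then [set k] else set0.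

Lemma votes_staircase k : votes staircase k = #|[set r : 'I_N | r < k]|.
Proof.
rewrite /votes.
have -> : [set b | k \in staircase b] =
          enum_val @^-1: setX [set k] [set r : 'I_N | r < k].
  apply/setP => b; rewrite !inE /staircase; case: (enum_val b) => a r /=.
  by case: ifP; rewrite !inE eq_sym; case: eqP => // -> ->.
by rewrite on_card_preimset ?cardsX ?cards1 ?mul1n //; apply/onW_bij/enum_val_bij.
Qed.

Lemma votes_staircase_inj : injective (votes staircase).
Proof.
suff lt_votes (k k' : 'I_N) : k < k' -> votes staircase k < votes staircase k'.
  move=> k k' eq_votes.
  by case: (ltngtP k k') => [/lt_votes|/lt_votes|/val_inj //]; rewrite eq_votes ltnn.
move=> lt_kk'; rewrite !votes_staircase; apply: proper_card; apply/properP; split.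
  by apply/subsetP => r; rewrite !inE => /ltn_trans; apply.
by exists k; rewrite !inE ?ltnn.
Qed.

Lemma exists_feasible : (forall c, 0 < v c) ->
  exists B (beta : 'I_B -> {set 'I_N}), feasible con v beta.
Proof.
move=> v_pos; exists _, staircase; apply: feasible_of_injective_votes.
  move=> b; apply/forallP => c; apply: leq_trans (v_pos c).
  apply: leq_trans (subset_leq_card (subsetIr _ _)) _.
  rewrite /staircase; case: (enum_val b) => k r.
  by case: ifP; rewrite ?cards1 ?cards0.
exact: votes_staircase_inj.
Qed.

End BallotStyle.

Theorem proposition1 (N C : nat) (con : 'I_N -> 'I_C) (v : 'I_C -> nat)
  (Hnonempty : forall c : 'I_C, exists i : 'I_N, con i = c)
  (Hv : forall c : 'I_C, 0 < v c) :
  exists (B : nat) (beta : 'I_B -> {set 'I_N}),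
    optimal con v beta /\
    (forall i j : 'I_N, con i = con j -> i < j ->
       #|[set b | i \in beta b]| < #|[set b | j \in beta b]|).
Proof.
have [B0 [beta0 feasible0]] := exists_feasible con Hv.
have [B [[beta1 feasible1] B_least]] :=
  @least_witness (fun B => exists beta : 'I_B -> {set 'I_N}, feasible con v beta)
    B0 (ex_intro _ beta0 feasible0).
have feasible1' : feasible con v (finfun beta1) by rewrite fun_of_finfun.
have [beta [feasible_beta potential_max]] :=
  @exists_argmax {ffun 'I_B -> {set 'I_N}} (fun beta => feasible con v beta)
    (fun beta => potential beta) _ feasible1'.
exists B, beta; split.
  by split=> // B' beta' feasible'; apply: B_least; exists beta'.
move=> i j con_ij lt_ij; rewrite -!/(votes beta _).
have neq_ij : i != j by rewrite neq_ltn lt_ij.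
have neq_votes := feasible_votes_neq feasible_beta neq_ij con_ij.
rewrite ltnNge leq_eqVlt eq_sym (negbTE neq_votes) /=; apply/negP => lt_votes.
have feasible_swap : feasible con v (finfun (relabel beta (tperm i j))).
  by rewrite fun_of_finfun; apply: feasible_relabel (tperm_con_preserving con_ij) _.
have := potential_max _ feasible_swap.
by rewrite /= fun_of_finfun leqNgt potential_swap.
Qed.
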